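(* Let $n\ge 1$ and let $P,Q\in\mathcal{P}_n$ satisfy $P^2=Q^2=I$, $P\neq\pm I$, $Q\neq\pm I$, and $PQ=-QP$. Then there exists a unique pair $(L,M)$ consisting of a $Z$-circuit $L$ on $n$ qubits and an $X$-circuit $M$ on $n$ qubits such that $(ML)\bullet P=I\otimes\cdots\otimes I\otimes Z$ and $(ML)\bullet Q=I\otimes\cdots\otimes I\otimes X$, where $ML$ denotes the product of the operators of $M$ and $L$.
   Context: Matrices: $X=\begin{bmatrix}0&1\\1&0\end{bmatrix}$, $Z=\begin{bmatrix}1&0\\0&-1\end{bmatrix}$, $H=\frac{1}{\sqrt2}\begin{bmatrix}1&1\\1&-1\end{bmatrix}$, $CZ=\mathrm{diag}(1,1,1,-1)$. Operators on $n$ qubits act on $(\mathbb{R}^2)^{\otimes n}$, qubit $1$ being the first tensor factor; a one-qubit gate on qubit $i$, or a two-qubit gate on qubits $i,i+1$ (qubit $i$ = first tensor factor of the gate = its upper qubit, $i+1$ its lower qubit), denotes that matrix tensored with identities on the other qubits. For matrices $C,P$, $C\bullet P=CPC^{-1}$. Real Pauli group: $\mathcal{P}_n=\{\pm(P_1\otimes\cdots\otimes P_n)\mid P_i\in\{I,X,Z,XZ\}\}$. A circuit is a finite sequence of gates $g_1,\dots,g_k$ ($g_1$ applied first); its operator is $g_k\cdots g_1$. Derived generators (formal symbols with defining gate sequences; in two-qubit symbols subscript $1$ is the upper, $2$ the lower qubit; '';'' separates steps): $A_1$ = empty, $A_2$ = $H$, $A_3$ = empty; $C_1$ = empty, $C_2$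 = $H;Z;H$; $E_1$ = empty, $E_2$ = $Z$; $B_1=B_5$ = $H_2;CZ;H_1,H_2;CZ;H_1,H_2;CZ$; $B_2=B_6$ = $CZ;H_1,H_2;CZ$; $B_3=B_7$ = $H_1;CZ;H_1,H_2;CZ$; $B_4=B_8$ = $H_2;CZ;H_2;CZ;H_1,H_2;CZ$; $D_1$ = $CZ;H_1,H_2;CZ;H_1,H_2;CZ;H_2$; $D_2$ = $H_1;CZ;H_1,H_2;CZ;H_2$; $D_3$ = $H_1,H_2;CZ;H_1,H_2;CZ;H_2$; $D_4$ = $H_1;CZ;H_1,H_2;CZ;H_2;CZ$. Symbols with equal defining sequences (e.g. $A_1,A_3$) are distinct symbols. Types in $\{\text{single},\text{double}\}$: $A_1,A_2$ output single, $A_3$ output double; $B_j$ has input type (lower qubit) and output type (upper qubit): $B_1,B_2,B_3$ single$\to$single, $B_4$ single$\to$double, $B_5,B_6,B_7$ double$\to$double, $B_8$ double$\to$single; $C_1,C_2$ have input type single. A $Z$-circuit on $n$ qubits: for some $m\in\{1,\dots,n\}$, $A_a$ on qubit $m$, then $B_{b_{m-1}}$ on qubits $m-1,m$, ..., then $B_{b_1}$ on qubits $1,2$, then $C_c$ on qubit 1, such that each $B$ or $C$ symbol's input type equals the output type of the symbol immediately preceding it. An $X$-circuit on $n$ qubits: $D_{d_1}$ on qubits $1,2$, then $D_{d_2}$ on qubits $2,3$, ..., then $D_{d_{n-1}}$ on qubits $n-1,n$, then $E_e$ on qubit $n$. Circuits of symbols are equal when their symbol sequences (and positions) coincide. *)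

From mathcomp Require Import all_boot all_order all_algebra.
From mathcomp Require Import mxtens.
From mathcomp Require Import reals.

Set Implicit Arguments.
Unset Strict Implicit.
Unset Printing Implicit Defensive.

Import Order.TTheory GRing.Theory Num.Theory.
Local Open Scope ring_scope.

Section Gates.
Variable R : realType.

(* one-qubit matrices; basis index 0 = |0>, 1 = |1> *)
Definition Xm : 'M[R]_2 := \matrix_(i < 2, j < 2) (if i != j then 1 else 0).
Definition Zm : 'M[R]_2 :=
  \matrix_(i < 2, j < 2) (if i == j then (if (i : nat) == 0%N then 1 else -1) else 0).
Definition Hm : 'M[R]_2 :=
  (Num.sqrt (2 : R))^-1 *:
  \matrix_(i < 2, j < 2) (if ((i : nat) == 1%N) && ((j : nat) == 1%N) then -1 else 1).
Definition CZm : 'M[R]_4 :=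
  \matrix_(i < 4, j < 4) (if i == j then (if (i : nat) == 3%N then -1 else 1) else 0).

(* n-fold tensor product f 0 (x) f 1 (x) ... (x) f (n-1);
   f 0 is the first tensor factor (qubit 1). *)
Fixpoint kron (n : nat) : (nat -> 'M[R]_2) -> 'M[R]_(2 ^ n) :=
  match n return (nat -> 'M[R]_2) -> 'M[R]_(2 ^ n) with
  | 0 => fun _ => 1%:M
  | n'.+1 => fun f =>
      castmx (esym (expnS 2 n'), esym (expnS 2 n')) (f 0%N *t kron n' (fun i => f i.+1))
  end.

Definition pauli_group (n : nat) (P : 'M[R]_(2 ^ n)) : Prop :=
  exists (s : R) (f : nat -> 'M[R]_2),
    (s = 1 \/ s = -1) /\
    (forall i, (i < n)%N -> f i \in [:: 1%:M; Xm; Zm; Xm *m Zm]) /\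
    P = s *: kron n f.

(* one-qubit gate G on qubit q (1-based): I_(2^(q-1)) (x) G (x) I_(2^(n-q)).
   conform_mx only serves to identify the dimension with 2^n (valid for 1<=q<=n). *)
Definition embed1 (n q : nat) (G : 'M[R]_2) : 'M[R]_(2 ^ n) :=
  conform_mx 1%:M ((1%:M : 'M[R]_(2 ^ q.-1)) *t G *t (1%:M : 'M[R]_(2 ^ (n - q)))).

(* two-qubit gate G on qubits q, q+1 (q upper = first tensor factor of G):
   I_(2^(q-1)) (x) G (x) I_(2^(n-q-1))  (valid for 1<=q<n). *)
Definition embed2 (n q : nat) (G : 'M[R]_4) : 'M[R]_(2 ^ n) :=
  conform_mx 1%:M ((1%:M : 'M[R]_(2 ^ q.-1)) *t G *t (1%:M : 'M[R]_(2 ^ (n - q.+1)))).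

End Gates.

(* elementary gates, qubits numbered from 1; CZg q acts on qubits q, q+1 *)
Inductive gate := Hg of nat | Zg of nat | CZg of nat.

Definition gate_op (R : realType) (n : nat) (g : gate) : 'M[R]_(2 ^ n) :=
  match g with
  | Hg q => embed1 n q (Hm R)
  | Zg q => embed1 n q (Zm R)
  | CZg q => embed2 n q (CZm R)
  end.

(* circuit g_1, ..., g_k (g_1 applied first) has operator g_k ... g_1 *)
Definition circuit_op (R : realType) (n : nat) (c : seq gate) : 'M[R]_(2 ^ n) :=
  foldl (fun acc g => gate_op R n g *m acc) 1%:M c.

Definition conj_by (R : realType) (n : nat) (C P : 'M[R]_(2 ^ n)) : 'M[R]_(2 ^ n) :=
  C *m P *m invmx C.

Inductive qtype := single | double.
Inductive Asym := A1 | A2 | A3.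
Inductive Bsym := B1 | B2 | B3 | B4 | B5 | B6 | B7 | B8.
Inductive Csym := C1 | C2.
Inductive Dsym := D1 | D2 | D3 | D4.
Inductive Esym := E1 | E2.

Definition A_out (a : Asym) : qtype :=
  match a with A1 | A2 => single | A3 => double end.
Definition B_in (b : Bsym) : qtype :=
  match b with B1 | B2 | B3 | B4 => single | _ => double end.
Definition B_out (b : Bsym) : qtype :=
  match b with B1 | B2 | B3 => single | B4 => double
             | B5 | B6 | B7 => double | B8 => single end.
Definition C_in (c : Csym) : qtype := single.

(* defining gate sequences; q = the qubit (one-qubit symbols) or the upper
   qubit (two-qubit symbols: subscript 1 = q, subscript 2 = q+1) *)
Definition A_gates (a : Asym) (q : nat) : seq gate :=
  match a with A1 => [::] | A2 => [:: Hg q] | A3 => [::] end.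
Definition C_gates (c : Csym) (q : nat) : seq gate :=
  match c with C1 => [::] | C2 => [:: Hg q; Zg q; Hg q] end.
Definition E_gates (e : Esym) (q : nat) : seq gate :=
  match e with E1 => [::] | E2 => [:: Zg q] end.
Definition B_gates (b : Bsym) (q : nat) : seq gate :=
  match b with
  | B1 | B5 => [:: Hg q.+1; CZg q; Hg q; Hg q.+1; CZg q; Hg q; Hg q.+1; CZg q]
  | B2 | B6 => [:: CZg q; Hg q; Hg q.+1; CZg q]
  | B3 | B7 => [:: Hg q; CZg q; Hg q; Hg q.+1; CZg q]
  | B4 | B8 => [:: Hg q.+1; CZg q; Hg q.+1; CZg q; Hg q; Hg q.+1; CZg q]
  end.
Definition D_gates (d : Dsym) (q : nat) : seq gate :=
  match d with
  | D1 => [:: CZg q; Hg q; Hg q.+1; CZg q; Hg q; Hg q.+1; CZg q; Hg q.+1]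
  | D2 => [:: Hg q; CZg q; Hg q; Hg q.+1; CZg q; Hg q.+1]
  | D3 => [:: Hg q; Hg q.+1; CZg q; Hg q; Hg q.+1; CZg q; Hg q.+1]
  | D4 => [:: Hg q; CZg q; Hg q; Hg q.+1; CZg q; Hg q.+1; CZg q]
  end.

(* A Z-circuit: A_za on qubit zm, then B symbols listed in application order
   zb = [:: b_(m-1); ...; b_1] (the j-th entry, j from 0, acts on qubits
   m-1-j, m-j), then C_zc on qubit 1. *)
Record zcircuit := ZCircuit { zm : nat; za : Asym; zb : seq Bsym; zc : Csym }.

Fixpoint chain_ok (t : qtype) (bs : seq Bsym) (c : Csym) : Prop :=
  match bs with
  | [::] => C_in c = t
  | b :: bs' => B_in b = t /\ chain_ok (B_out b) bs' c
  end.

Definition is_zcircuit (n : nat) (L : zcircuit) : Prop :=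
  (1 <= zm L <= n)%N /\ size (zb L) = (zm L).-1 /\ chain_ok (A_out (za L)) (zb L) (zc L).

Definition zcircuit_gates (L : zcircuit) : seq gate :=
  A_gates (za L) (zm L)
  ++ flatten [seq B_gates (nth B1 (zb L) j) ((zm L).-1 - j) | j <- iota 0 (size (zb L))]
  ++ C_gates (zc L) 1.

(* An X-circuit: D_(d_1) on qubits 1,2, ..., D_(d_(n-1)) on qubits n-1,n, then
   E_e on qubit n; xd = [:: d_1; ...; d_(n-1)]. *)
Record xcircuit := XCircuit { xd : seq Dsym; xe : Esym }.

Definition is_xcircuit (n : nat) (M : xcircuit) : Prop := size (xd M) = n.-1.

Definition xcircuit_gates (n : nat) (M : xcircuit) : seq gate :=
  flatten [seq D_gates (nth D1 (xd M) j) j.+1 | j <- iota 0 (size (xd M))]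
  ++ E_gates (xe M) n.

Arguments pauli_group R n P : clear implicits.
Arguments kron R n f : clear implicits.
Arguments Xm R : clear implicits.
Arguments Zm R : clear implicits.

From Pilot Require Import Defs.
From mathcomp Require Import all_boot all_order all_algebra.
From mathcomp Require Import mxtens.
From mathcomp Require Import reals boolp.
From mathcomp Require Import zify ring lra.

Set Implicit Arguments.
Unset Strict Implicit.
Unset Printing Implicit Defensive.

(* Conjugation by H, Z and CZ maps signed Pauli strings to signed Pauli strings, so
   everything can be computed on pairs (sign, word), a word giving each qubit a
   letter X^x Z^z; distinct such pairs have distinct matrices (the letters are
   orthogonal for the trace form).
   Following a Z-circuit block by block shows that it sends exactly one signed
   word to Z_1: its letters are read off the B and A symbols, its sign off C.
   Conversely a nontrivial involutive word determines its Z-circuit: m is the last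
   qubit with a nonidentity letter and the type flowing out of each block is the
   parity of the Y letters below it. Likewise an X-circuit sends Z_1 to Z_n and
   exactly one signed word to X_n; that word starts with X or Y, its other letters
   are the D symbols and its sign is E.
   For P, Q as in the theorem let L be the Z-circuit of P. Conjugating by L turns
   Q into an involution anticommuting with Z_1, i.e. starting with X or Y, which
   determines the X-circuit M; every step was forced, whence uniqueness. *)

(** * Signed Pauli words and the Clifford action *)

(* The letter (x, z) stands for the one-qubit matrix X^x Z^z. *)
Definition letter := (bool * bool)%type.
Notation lI := ((false, false) : letter).
Notation lX := ((true, false) : letter).
Notation lZ := ((false, true) : letter).
Notation lY := ((true, true) : letter).
Definition isY (l : letter) : bool := let: (x, z) := l in x && z.

Definition word := nat -> letter.

Definition upd (w : word) (i : nat) (l : letter) : word :=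
  fun k => if k == i then l else w k.

Lemma upd_same w i l : upd w i l i = l.
Proof. by rewrite /upd eqxx. Qed.

Lemma upd_other w i j l : j != i -> upd w i l j = w j.
Proof. by rewrite /upd => /negbTE ->. Qed.

Lemma upd_upd w i l l' : upd (upd w i l) i l' = upd w i l'.
Proof. by apply: funext => k; rewrite /upd; case: eqP. Qed.

Lemma upd_comm w i j l l' : i != j -> upd (upd w i l) j l' = upd (upd w j l') i l.
Proof.
move=> ne; apply: funext => k; rewrite /upd.
by case: eqP => // ->; rewrite eq_sym (negbTE ne).
Qed.

Lemma upd_id w i : upd w i (w i) = w.
Proof. by apply: funext => k; rewrite /upd; case: eqP => [->|]. Qed.

(* A signed word (s, w) stands for (-1)^s times the tensor product of the letters
   w i; gates number qubits from 1 and words from 0, so qubit q carries w q.-1. *)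
Definition gate_act (g : gate) (st : bool * word) : bool * word :=
  let: (s, w) := st in
  match g with
  | Hg q => let l := w q.-1 in (s (+) isY l, upd w q.-1 (l.2, l.1))
  | Zg q => (s (+) (w q.-1).1, w)
  | CZg q => let l1 := w q.-1 in let l2 := w q in
      (s (+) (l1.1 && l2.1),
       upd (upd w q.-1 (l1.1, l1.2 (+) l2.1)) q (l2.1, l2.2 (+) l1.1))
  end.

Definition circuit_act (gs : seq gate) (st : bool * word) : bool * word :=
  foldl (fun st g => gate_act g st) st gs.

Lemma circuit_act_cat gs1 gs2 st :
  circuit_act (gs1 ++ gs2) st = circuit_act gs2 (circuit_act gs1 st).
Proof. exact: foldl_cat. Qed.

Lemma gate_actK g : involutive (gate_act g).
Proof.
case=> s w; case: g => q /=.
- case E: (w q.-1) => [x z] /=.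
  by rewrite upd_same upd_upd /= -addbA andbC addbb addbF -E upd_id.
- by rewrite -addbA addbb addbF.
have [e|ne] := eqVneq q.-1 q.
  (* CZg 0 degenerates to a gate acting twice on the letter w 0 *)
  rewrite e !upd_upd !upd_same /=; case E: (w q) => [x z] /=.
  by rewrite -addbA addbb addbF addbK -E upd_id.
rewrite (upd_other _ _ ne) !upd_same /= -addbA addbb addbF !addbK.
congr pair; apply: funext => k; rewrite /upd.
by case: (k =P q) => [->|_]; last case: (k =P q.-1) => [->|_]; rewrite -?surjective_pairing.
Qed.

Lemma circuit_actK gs : cancel (circuit_act gs) (circuit_act (rev gs)).
Proof.
elim: gs => // g gs IH st.
by rewrite rev_cons -cats1 circuit_act_cat IH /= gate_actK.
Qed.

Lemma circuit_act_inj gs st st' : circuit_act gs st = circuit_act gs st' -> st = st'.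
Proof. by move=> eq_act; rewrite -(circuit_actK gs st) eq_act circuit_actK. Qed.

Definition wf_word (n : nat) (w : word) := forall i, n <= i -> w i = lI.

Definition valid_gate (n : nat) (g : gate) : bool :=
  match g with Hg q | Zg q => 0 < q <= n | CZg q => 0 < q < n end.

Lemma wf_circuit_act n gs st : all (valid_gate n) gs -> wf_word n st.2 ->
  wf_word n (circuit_act gs st).2.
Proof.
elim: gs st => [|g gs IH] [s w] //= /andP[vg vgs] wf_w; apply: IH => // i le_ni.
by case: g vg => q /= /andP[q0 qn]; rewrite ?upd_other ?wf_w //; apply/negP => /eqP; lia.
Qed.

(* Gates on two adjacent qubits: 0 is the upper qubit, 1 the lower one. *)
Inductive local_gate := LH0 | LH1 | LZ0 | LCZ.

Definition place (q : nat) (g : local_gate) : gate :=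
  match g with LH0 => Hg q | LH1 => Hg q.+1 | LZ0 => Zg q | LCZ => CZg q end.

Definition local_act (g : local_gate) (st : bool * letter * letter) :=
  let: (s, u, v) := st in
  match g with
  | LH0 => (s (+) isY u, (u.2, u.1), v)
  | LH1 => (s (+) isY v, u, (v.2, v.1))
  | LZ0 => (s (+) u.1, u, v)
  | LCZ => (s (+) (u.1 && v.1), (u.1, u.2 (+) v.1), (v.1, v.2 (+) u.1))
  end.

Definition local_circuit_act (gs : seq local_gate) st :=
  foldl (fun st g => local_act g st) st gs.

Lemma circuit_act_place q gs s w : 0 < q ->
  circuit_act (map (place q) gs) (s, w) =
  let: (s', u, v) := local_circuit_act gs (s, w q.-1, w q) in
  (s', upd (upd w q.-1 u) q v).
Proof.
case: q => // p _ /=; have pS : p != p.+1 by rewrite neq_ltn ltnSn.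
have Sp : p.+1 != p by rewrite eq_sym.
elim: gs s w => [|g gs IH] s w; first by rewrite /= !upd_id.
rewrite map_cons /circuit_act /= -/(circuit_act _ _).
case: g; rewrite /= IH /= ?upd_same ?(upd_other _ _ pS) ?(upd_other _ _ Sp) ?upd_same;
  by case: local_circuit_act => [[s' u] v]; rewrite ?(upd_comm _ _ _ Sp) ?upd_upd.
Qed.

(** * Z- and X-circuits on signed words *)

Definition A_local (a : Asym) : seq local_gate :=
  match a with A2 => [:: LH0] | _ => [::] end.
Definition B_local (b : Bsym) : seq local_gate :=
  match b with
  | B1 | B5 => [:: LH1; LCZ; LH0; LH1; LCZ; LH0; LH1; LCZ]
  | B2 | B6 => [:: LCZ; LH0; LH1; LCZ]
  | B3 | B7 => [:: LH0; LCZ; LH0; LH1; LCZ]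
  | B4 | B8 => [:: LH1; LCZ; LH1; LCZ; LH0; LH1; LCZ]
  end.
Definition C_local (c : Csym) : seq local_gate :=
  match c with C1 => [::] | C2 => [:: LH0; LZ0; LH0] end.
Definition D_local (d : Dsym) : seq local_gate :=
  match d with
  | D1 => [:: LCZ; LH0; LH1; LCZ; LH0; LH1; LCZ; LH1]
  | D2 => [:: LH0; LCZ; LH0; LH1; LCZ; LH1]
  | D3 => [:: LH0; LH1; LCZ; LH0; LH1; LCZ; LH1]
  | D4 => [:: LH0; LCZ; LH0; LH1; LCZ; LH1; LCZ]
  end.
Definition E_local (e : Esym) : seq local_gate :=
  match e with E1 => [::] | E2 => [:: LZ0] end.

Lemma A_gatesE a q : A_gates a q = map (place q) (A_local a). Proof. by case: a. Qed.
Lemma B_gatesE b q : B_gates b q = map (place q) (B_local b). Proof. by case: b. Qed.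
Lemma C_gatesE c q : C_gates c q = map (place q) (C_local c). Proof. by case: c. Qed.
Lemma D_gatesE d q : D_gates d q = map (place q) (D_local d). Proof. by case: d. Qed.
Lemma E_gatesE e q : E_gates e q = map (place q) (E_local e). Proof. by case: e. Qed.

Definition type_parity (t : qtype) : bool := if t is Defs.double then true else false.
Definition type_letter (t : qtype) : letter := if t is Defs.double then lY else lZ.
Definition xy_letter (b : bool) : letter := if b then lY else lX.

Definition A_letter (a : Asym) : letter :=
  match a with A1 => lZ | A2 => lX | A3 => lY end.
Definition B_letter (b : Bsym) : letter :=
  match b with B1 | B5 => lI | B2 | B6 => lX | B3 | B7 => lZ | B4 | B8 => lY end.
Definition D_letter (d : Dsym) : letter :=
  match d with D1 => lI | D2 => lX | D3 => lZ | D4 => lY end.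
Definition C_sign (c : Csym) : bool := if c is C2 then true else false.
Definition D_flip (d : Dsym) : bool := if d is D4 then true else false.
Definition E_sign (e : Esym) : bool := if e is E2 then true else false.

Lemma A_gates_act a q s w : 0 < q -> w q.-1 = A_letter a ->
  circuit_act (A_gates a q) (s, w) = (s, upd w q.-1 (type_letter (A_out a))).
Proof.
move=> q0 wq; rewrite A_gatesE circuit_act_place // wq.
case: q q0 wq => // p _ wq; rewrite -[upd w p _](upd_id _ p.+1) upd_other ?gtn_eqF //.
by case: a wq => /=; rewrite ?addbF.
Qed.

Lemma B_gates_act b q s w : 0 < q -> w q.-1 = B_letter b -> w q = type_letter (B_in b) ->
  circuit_act (B_gates b q) (s, w) = (s, upd (upd w q.-1 (type_letter (B_out b))) q lI).
Proof.
move=> q0 wq wq'; rewrite B_gatesE circuit_act_place // wq wq'.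
by case: b {wq wq'} => /=; rewrite ?addbF ?addbT ?negbK.
Qed.

Lemma C_gates_act c s w : w 0 = lZ -> circuit_act (C_gates c 1) (s, w) = (s (+) C_sign c, w).
Proof.
move=> w0; rewrite C_gatesE circuit_act_place //= w0.
by case: c => /=; rewrite ?addbF ?addbT ?negbK -w0 !upd_id.
Qed.

Lemma D_gates_act_XY d b q s w : 0 < q -> w q.-1 = xy_letter b -> w q = D_letter d ->
  circuit_act (D_gates d q) (s, w) = (s, upd (upd w q.-1 lI) q (xy_letter (b (+) D_flip d))).
Proof.
move=> q0 wq wq'; rewrite D_gatesE circuit_act_place // wq wq'.
by case: d {wq'}; case: b {wq} => /=; rewrite ?addbF ?addbT ?negbK.
Qed.

Lemma D_gates_act_Z d q s w : 0 < q -> w q.-1 = lZ -> w q = lI ->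
  circuit_act (D_gates d q) (s, w) = (s, upd (upd w q.-1 lI) q lZ).
Proof.
move=> q0 wq wq'; rewrite D_gatesE circuit_act_place // wq wq'.
by case: d => /=; rewrite ?addbF ?addbT ?negbK.
Qed.

Lemma E_gates_act_X e q s w : 0 < q -> w q.-1 = lX ->
  circuit_act (E_gates e q) (s, w) = (s (+) E_sign e, w).
Proof.
move=> q0 wq; rewrite E_gatesE circuit_act_place // wq.
by case: e => /=; rewrite ?addbF ?addbT -wq !upd_id.
Qed.

Lemma E_gates_act_Z e q s w : 0 < q -> w q.-1 = lZ ->
  circuit_act (E_gates e q) (s, w) = (s, w).
Proof.
move=> q0 wq; rewrite E_gatesE circuit_act_place // wq.
by case: e => /=; rewrite ?addbF -wq !upd_id.
Qed.

Definition Bsweep (bs : seq Bsym) (q : nat) : seq gate :=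
  flatten [seq B_gates (nth B1 bs j) (q - j) | j <- iota 0 (size bs)].

Definition Dsweep (ds : seq Dsym) (q : nat) : seq gate :=
  flatten [seq D_gates (nth D1 ds j) (q + j) | j <- iota 0 (size ds)].

Lemma Bsweep_cons b bs q : Bsweep (b :: bs) q = B_gates b q ++ Bsweep bs q.-1.
Proof.
rewrite /Bsweep /= subn0 -[1]/(1 + 0) iotaDl -map_comp.
by congr (_ ++ flatten _); apply: eq_map => j /=; rewrite subnS -subn1 subnAC subn1.
Qed.

Lemma Dsweep_cons d ds q : Dsweep (d :: ds) q = D_gates d q ++ Dsweep ds q.+1.
Proof.
rewrite /Dsweep /= addn0 -[1]/(1 + 0) iotaDl -map_comp.
by congr (_ ++ flatten _); apply: eq_map => j /=; rewrite add1n addnS addSn.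
Qed.

Ltac case_ifs := repeat (case: ifP => /= ?); try done; try (exfalso; lia).

Lemma Bsweep_act bs q t c s w : size bs <= q -> chain_ok t bs c -> w q = type_letter t ->
  (forall j, j < size bs -> w (q - j).-1 = B_letter (nth B1 bs j)) ->
  circuit_act (Bsweep bs q) (s, w) =
  (s, fun i => if i == q - size bs then lZ
               else if q - size bs < i <= q then lI else w i).
Proof.
elim: bs q t w => [|b bs IH] q t w /=.
  move=> _ <- wq _; congr pair; apply: funext => i.
  by rewrite subn0; case: (i =P q) => [->|_]; case_ifs.
move=> sz [bt chain] wq wB; rewrite Bsweep_cons circuit_act_cat.
have q0 : 0 < q by lia.
have wb : w q.-1 = B_letter b by rewrite -(subn0 q) (wB 0).
rewrite B_gates_act ?bt // (IH q.-1 (B_out b)) //; first last.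
- move=> j lt_j; rewrite !upd_other; try (apply/negP => /eqP; lia).
  have -> : q.-1 - j = q - j.+1 by lia.
  exact: (wB j.+1 lt_j).
- by rewrite upd_other ?upd_same //; apply/negP => /eqP; lia.
- lia.
congr pair; apply: funext => i; rewrite /upd.
have -> : q - (size bs).+1 = q.-1 - size bs by lia.
by case_ifs.
Qed.

Definition D_parity (ds : seq Dsym) : bool := foldr (fun d b => D_flip d (+) b) false ds.

Lemma Dsweep_act_X ds q s w : 0 < q -> w q.-1 = xy_letter (D_parity ds) ->
  (forall j, j < size ds -> w (q + j) = D_letter (nth D1 ds j)) ->
  circuit_act (Dsweep ds q) (s, w) =
  (s, fun i => if i == q.-1 + size ds then lX
               else if q.-1 <= i < q.-1 + size ds then lI else w i).
Proof.
elim: ds q w => [|d ds IH] q w /=.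
  move=> _ wq _; congr pair; apply: funext => i.
  by rewrite addn0; case: (i =P q.-1) => [->|_]; case_ifs.
move=> q0 wq wD; rewrite Dsweep_cons circuit_act_cat.
have wd : w q = D_letter d by rewrite -(addn0 q) (wD 0).
rewrite (D_gates_act_XY _ q0 wq wd) (IH q.+1) //=; first last.
- move=> j lt_j; rewrite !upd_other; try (apply/negP => /eqP; lia).
  by rewrite addSnnS (wD j.+1).
- by rewrite upd_same addbC addbA addbb.
congr pair; apply: funext => i; rewrite /upd.
by case_ifs.
Qed.

Lemma Dsweep_act_Z ds q s w : 0 < q -> w q.-1 = lZ ->
  (forall j, j < size ds -> w (q + j) = lI) ->
  circuit_act (Dsweep ds q) (s, w) =
  (s, fun i => if i == q.-1 + size ds then lZ
               else if q.-1 <= i < q.-1 + size ds then lI else w i).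
Proof.
elim: ds q w => [|d ds IH] q w /=.
  move=> _ wq _; congr pair; apply: funext => i.
  by rewrite addn0; case: (i =P q.-1) => [->|_]; case_ifs.
move=> q0 wq wI; rewrite Dsweep_cons circuit_act_cat.
rewrite D_gates_act_Z ?(IH q.+1) //=; first last.
- by rewrite -(addn0 q) wI.
- move=> j lt_j; rewrite !upd_other; try (apply/negP => /eqP; lia).
  by rewrite addSnnS wI.
- by rewrite upd_same.
congr pair; apply: funext => i; rewrite /upd.
by case_ifs.
Qed.

Definition word_at (k : nat) (l : letter) : word := fun i => if i == k then l else lI.

Lemma wf_word_at n k l : k < n -> wf_word n (word_at k l).
Proof. by move=> lt_kn i le_ni; rewrite /word_at ifN //; apply/eqP; lia. Qed.

Definition zsource (L : zcircuit) : bool * word :=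
  (C_sign (zc L),
   fun i => if i < (zm L).-1 then B_letter (nth B1 (zb L) ((zm L).-2 - i))
            else if i == (zm L).-1 then A_letter (za L) else lI).

Definition xsource (n : nat) (M : xcircuit) : bool * word :=
  (E_sign (xe M),
   fun i => if i == 0 then xy_letter (D_parity (xd M))
            else if i < n then D_letter (nth D1 (xd M) i.-1) else lI).

Lemma zsource_act n L : is_zcircuit n L ->
  circuit_act (zcircuit_gates L) (zsource L) = (false, word_at 0 lZ).
Proof.
case: L => m a bs c [/= /andP[m1 mn] [sz chain]].
rewrite /zcircuit_gates /= -/(Bsweep bs m.-1) !circuit_act_cat.
rewrite A_gates_act /= ?ltnn ?eqxx //.
rewrite (Bsweep_act (t := A_out a) (c := c)) ?upd_same //; first last.
- move=> j lt_j; rewrite upd_other; last by apply/negP => /eqP; lia.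
  have -> : (m.-1 - j).-1 < m.-1 by lia.
  by have -> : m.-2 - (m.-1 - j).-1 = j by lia.
- lia.
rewrite C_gates_act; last by rewrite sz subnn eqxx.
rewrite addbb; congr pair; apply: funext => i.
by rewrite /word_at /upd sz subnn; case_ifs.
Qed.

Lemma xsource_act n M : 0 < n -> is_xcircuit n M ->
  circuit_act (xcircuit_gates n M) (xsource n M) = (false, word_at n.-1 lX).
Proof.
case: M => ds e n0 /= sz.
rewrite /xcircuit_gates /= -/(Dsweep ds 1) circuit_act_cat Dsweep_act_X //; last first.
  by move=> j; rewrite sz => lt_j /=; have -> : j.+1 < n by lia.
rewrite E_gates_act_X //; last by rewrite sz /= eqxx.
rewrite addbb; congr pair; apply: funext => i.
by rewrite /word_at sz /=; case_ifs.
Qed.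

Lemma xcircuit_act_Z n M : 0 < n -> is_xcircuit n M ->
  circuit_act (xcircuit_gates n M) (false, word_at 0 lZ) = (false, word_at n.-1 lZ).
Proof.
case: M => ds e n0 /= sz.
rewrite /xcircuit_gates /= -/(Dsweep ds 1) circuit_act_cat Dsweep_act_Z //.
rewrite E_gates_act_Z //; last by rewrite sz /= eqxx.
congr pair; apply: funext => i.
by rewrite /word_at sz /=; case_ifs.
Qed.

Definition last_nonI (n : nat) (w : word) : nat := \max_(i < n | w i != lI) i.

Lemma last_nonI_spec n w : (exists2 i, i < n & w i != lI) ->
  [/\ last_nonI n w < n, w (last_nonI n w) != lI
    & forall i, last_nonI n w < i < n -> w i = lI].
Proof.
case=> i lt_in wi; rewrite /last_nonI (bigmax_eq_arg (Ordinal lt_in)) //.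
case: arg_maxnP => // k wk kmax; split => // j /andP[lt_kj lt_jn].
by apply/eqP; apply: contraTT lt_kj => wj; rewrite -leqNgt; exact: (kmax (Ordinal lt_jn)).
Qed.

Lemma last_nonIP n w k : k < n -> w k != lI ->
  (forall i, k < i < n -> w i = lI) -> last_nonI n w = k.
Proof.
move=> lt_kn wk above; apply/eqP; rewrite eqn_leq (leq_bigmax_cond (Ordinal lt_kn)) // andbT.
apply/bigmax_leqP => i wi; rewrite leqNgt; apply/negP => lt_ki.
by move: wi; rewrite above ?eqxx // lt_ki ltn_ord.
Qed.

Fixpoint y_parity (w : word) (k : nat) : bool :=
  if k is k'.+1 then y_parity w k' (+) isY (w k') else false.

Lemma y_parityS0 w k : y_parity w k.+1 = isY (w 0) (+) y_parity (fun i => w i.+1) k.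
Proof.
elim: k => [|k IH]; first by rewrite /= addbF.
by rewrite -[y_parity w k.+2]/(y_parity w k.+1 (+) isY (w k.+1)) IH -addbA.
Qed.

Lemma y_parity_lI w k l : (forall i, k <= i < l -> w i = lI) -> k <= l ->
  y_parity w l = y_parity w k.
Proof.
elim: l => [|l IH] wI; first by rewrite leqn0 => /eqP ->.
rewrite leq_eqVlt => /orP[/eqP -> //|lt_kl] /=.
rewrite wI /=; last by rewrite -ltnS lt_kl ltnSn.
by rewrite addbF IH // => i /andP[le_ki lt_il]; rewrite wI // le_ki ltnW.
Qed.

Lemma y_parity_word_at k l m : ~~ isY l -> y_parity (word_at k l) m = false.
Proof. by move=> /negbTE nY; elim: m => //= m ->; rewrite /word_at; case: ifP. Qed.

Definition B_parity (bs : seq Bsym) : bool := foldr (fun b p => isY (B_letter b) (+) p) false bs.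

Lemma chain_ok_parity t bs c : chain_ok t bs c -> type_parity t = B_parity bs.
Proof. by elim: bs t => [|b bs IH] t /=; [move=> <- | case=> <- /IH <-; case: b]. Qed.

Lemma chain_ok_drop t bs c j : chain_ok t bs c -> j < size bs ->
  chain_ok (B_out (nth B1 bs j)) (drop j.+1 bs) c.
Proof.
elim: bs t j => [|b bs IH] t [|j] //= [_ chain]; first by rewrite drop0.
exact: IH chain.
Qed.

Definition parity_type (p : bool) : qtype := if p then Defs.double else single.

Definition A_of (p : bool) (l : letter) : Asym := if p then A3 else if l == lX then A2 else A1.

Definition B_of (p : bool) (l : letter) : Bsym :=
  if p then (if l == lI then B5 else if l == lX then B6 else if l == lZ then B7 else B4)
  else (if l == lI then B1 else if l == lX then B2 else if l == lZ then B3 else B8).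

Definition D_of (l : letter) : Dsym :=
  if l == lI then D1 else if l == lX then D2 else if l == lZ then D3 else D4.

(* The type leaving a block is the parity of the Y letters strictly below it. *)
Definition zcircuit_of (n : nat) (st : bool * word) : zcircuit :=
  let w := st.2 in let k := last_nonI n w in
  ZCircuit k.+1 (A_of (y_parity w k) (w k))
    [seq B_of (y_parity w i) (w i) | i <- rev (iota 0 k)]
    (if st.1 then C2 else C1).

Definition xcircuit_of (n : nat) (st : bool * word) : xcircuit :=
  XCircuit (mkseq (fun j => D_of (st.2 j.+1)) n.-1) (if st.1 then E2 else E1).

Lemma y_parity_zsource n L k : is_zcircuit n L -> k <= (zm L).-1 ->
  y_parity (zsource L).2 k = B_parity (drop ((zm L).-1 - k) (zb L)).
Proof.
case: L => m a bs c [/= /andP[m1 mn] [sz chain]].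
elim: k => [|k IH] le_km /=; first by rewrite subn0 -sz drop_size.
rewrite IH ?(ltnW le_km) // le_km (@drop_nth _ B1 (m.-1 - k.+1)); last by lia.
have -> : (m.-1 - k.+1).+1 = m.-1 - k by lia.
have -> : m.-2 - k = m.-1 - k.+1 by lia.
by rewrite /= addbC.
Qed.

Lemma zcircuit_of_zsource n L : is_zcircuit n L -> zcircuit_of n (zsource L) = L.
Proof.
case: L => m a bs c zL; have [/= /andP[m1 mn] [sz chain]] := zL; rewrite /zcircuit_of.
have -> : last_nonI n (zsource (ZCircuit m a bs c)).2 = m.-1.
  apply: last_nonIP => [|/=|i /andP[lt_mi lt_in]] /=; first lia.
    by rewrite ltnn eqxx; case: a {zL chain}.
  by rewrite ltnNge ltnW //= gtn_eqF.
have par := y_parity_zsource zL (leqnn _); rewrite /= subnn drop0 in par.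
rewrite prednK //; congr ZCircuit.
- by rewrite par -(chain_ok_parity chain) /= ltnn eqxx; case: a {zL chain par}.
- apply: (@eq_from_nth _ B1); first by rewrite size_map size_rev size_iota sz.
  move=> j; rewrite size_map size_rev size_iota => lt_j.
  rewrite (nth_map 0) ?size_rev ?size_iota // nth_rev ?size_iota // nth_iota; last by lia.
  rewrite add0n (_ : m.-1 - j.+1 = m.-2 - j); last by lia.
  rewrite (y_parity_zsource (k := m.-2 - j) zL) /=; last lia.
  have -> : m.-1 - (m.-2 - j) = j.+1 by lia.
  rewrite -(chain_ok_parity (chain_ok_drop chain _)) ?sz //.
  have -> : m.-2 - j < m.-1 by lia.
  have -> : m.-2 - (m.-2 - j) = j by lia.
  by case: (nth B1 bs j).
- by case: c {zL chain par}.
Qed.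

Lemma chain_ok_zcircuit_of w k c :
  chain_ok (parity_type (y_parity w k)) [seq B_of (y_parity w i) (w i) | i <- rev (iota 0 k)] c.
Proof.
elim: k => [|k IH] //; rewrite -addn1 iotaD cats1 rev_rcons /= add0n addn1.
have -> : B_out (B_of (y_parity w k) (w k)) = parity_type (y_parity w k).
  by case: (y_parity w k); case: (w k) => [[] []].
by split => //=; case: (y_parity w k); case: (w k) => [[] []].
Qed.

Lemma zsource_zcircuit_of n s w : wf_word n w -> (exists2 i, i < n & w i != lI) ->
  y_parity w n = false ->
  is_zcircuit n (zcircuit_of n (s, w)) /\ zsource (zcircuit_of n (s, w)) = (s, w).
Proof.
move=> wf_w nontriv even; have [lt_kn wk above] := last_nonI_spec nontriv.
rewrite /zcircuit_of /=; set k := last_nonI n w in lt_kn wk above *.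
have wI i : k < i -> w i = lI.
  by move=> lt_ki; case: (ltnP i n) => [lt_in|/wf_w //]; rewrite above ?lt_ki.
have par_k : y_parity w k = isY (w k).
  have wI' i : k < i < n -> w i = lI by case/andP => /wI.
  move: even; rewrite (y_parity_lI wI' lt_kn) /=.
  by case: (y_parity w k); case: (isY (w k)).
split.
  split; first exact: lt_kn.
  rewrite size_map size_rev size_iota; split => //.
  have -> : A_out (A_of (y_parity w k) (w k)) = parity_type (y_parity w k).
    by rewrite /A_of; case: (y_parity w k); case: (w k == lX).
  exact: chain_ok_zcircuit_of.
congr pair; first by case: s.
apply: funext => i /=; case: ifP => [lt_ik|ge_ik].
  rewrite (nth_map 0) ?size_rev ?size_iota; last by lia.
  rewrite nth_rev ?size_iota ?nth_iota; try lia.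
  have -> : 0 + (k - (k.-1 - i).+1) = i by lia.
  by case: (y_parity w i); case: (w i) => [[] []].
case: ifP => [/eqP ->|ne_ik]; first by rewrite par_k; move: wk; case: (w k) => [[] []].
by rewrite wI //; lia.
Qed.

Lemma D_parity_mkseq (w : word) k : D_parity (mkseq (fun j => D_of (w j)) k) = y_parity w k.
Proof.
elim: k => [|k IH] //; rewrite mkseqS /D_parity foldr_rcons -/(D_parity _) /= -IH.
have foldr_xor s b : foldr (fun d p => D_flip d (+) p) b s = D_parity s (+) b.
  by elim: s => [|d s IHs] //=; rewrite IHs addbA.
by rewrite foldr_xor; case: (w k) => [[] []]; rewrite /= ?addbF ?addbT.
Qed.

Lemma xcircuit_of_xsource n M : 0 < n -> is_xcircuit n M -> xcircuit_of n (xsource n M) = M.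
Proof.
case: M => ds e n0 /= sz; rewrite /xcircuit_of /=; congr XCircuit; last by case: e {sz}.
apply: (@eq_from_nth _ D1); first by rewrite size_mkseq sz.
move=> j; rewrite size_mkseq => lt_j; rewrite nth_mkseq //.
have -> : j.+1 < n by lia.
by case: (nth D1 ds j).
Qed.

Lemma xsource_xcircuit_of n s w : 0 < n -> wf_word n w -> (w 0).1 ->
  y_parity w n = false ->
  is_xcircuit n (xcircuit_of n (s, w)) /\ xsource n (xcircuit_of n (s, w)) = (s, w).
Proof.
move=> n0 wf_w w0 even; split; first by rewrite /is_xcircuit /= size_mkseq.
rewrite /xsource /=; congr pair; first by case: s.
apply: funext => i; case: ifP => [/eqP ->|i0].
  rewrite D_parity_mkseq; move: even; rewrite -(prednK n0) y_parityS0.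
  by move: w0; case: (w 0) => [[] []] //= _; case: (y_parity _ _).
case: ifP => [lt_in|ge_in]; last by rewrite wf_w // leqNgt ge_in.
rewrite nth_mkseq ?prednK; try lia.
by case: (w i) => [[] []].
Qed.

Lemma zcircuit_of_spec n st : wf_word n st.2 -> (exists2 i, i < n & st.2 i != lI) ->
  y_parity st.2 n = false ->
  is_zcircuit n (zcircuit_of n st) /\
  circuit_act (zcircuit_gates (zcircuit_of n st)) st = (false, word_at 0 lZ).
Proof.
case: st => s w wf_w nontriv even; have [zL src] := zsource_zcircuit_of s wf_w nontriv even.
by split; last rewrite -{2}src (zsource_act zL).
Qed.

Lemma xcircuit_of_spec n st : 0 < n -> wf_word n st.2 -> (st.2 0).1 ->
  y_parity st.2 n = false ->
  is_xcircuit n (xcircuit_of n st) /\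
  circuit_act (xcircuit_gates n (xcircuit_of n st)) st = (false, word_at n.-1 lX).
Proof.
case: st => s w n0 wf_w w0 even; have [xM src] := xsource_xcircuit_of s n0 wf_w w0 even.
by split; last rewrite -{2}src (xsource_act n0 xM).
Qed.

Lemma normal_form_canonical n L M stP stQ : 0 < n -> is_zcircuit n L -> is_xcircuit n M ->
  circuit_act (zcircuit_gates L ++ xcircuit_gates n M) stP = (false, word_at n.-1 lZ) ->
  circuit_act (zcircuit_gates L ++ xcircuit_gates n M) stQ = (false, word_at n.-1 lX) ->
  L = zcircuit_of n stP /\ M = xcircuit_of n (circuit_act (zcircuit_gates L) stQ).
Proof.
move=> n0 zL xM; rewrite !(circuit_act_cat (zcircuit_gates L)).
rewrite -(xcircuit_act_Z n0 xM) -(xsource_act n0 xM).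
move=> /circuit_act_inj LP /circuit_act_inj ->; rewrite xcircuit_of_xsource //; split=> //.
rewrite -(zcircuit_of_zsource zL); congr zcircuit_of.
by apply: (@circuit_act_inj (zcircuit_gates L)); rewrite LP (zsource_act zL).
Qed.

Lemma all_flatten (T : Type) (a : pred T) (ss : seq (seq T)) :
  all a (flatten ss) = all (all a) ss.
Proof. by elim: ss => //= s ss IH; rewrite all_cat IH. Qed.

Lemma zcircuit_valid n L : is_zcircuit n L -> all (valid_gate n) (zcircuit_gates L).
Proof.
case: L => m a bs c [/= /andP[m1 mn] [sz _]].
rewrite /zcircuit_gates /= !all_cat all_flatten all_map; apply/and3P; split.
- by case: a => //=; rewrite m1 mn.
- apply/allP => j; rewrite mem_iota add0n => /andP[_ lt_j] /=.
  by case: (nth B1 bs j) => /=; lia.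
- by case: c => //=; rewrite (leq_trans m1 mn).
Qed.

Lemma xcircuit_valid n M : 0 < n -> is_xcircuit n M -> all (valid_gate n) (xcircuit_gates n M).
Proof.
case: M => ds e n0 /= sz; rewrite /xcircuit_gates /= all_cat all_flatten all_map.
apply/andP; split; last by case: e {sz} => //=; rewrite n0 leqnn.
apply/allP => j; rewrite mem_iota add0n sz => /andP[_ lt_j] /=.
by case: (nth D1 ds j) => /=; lia.
Qed.

(** * Tensor products and embedded gates *)

Import Order.TTheory GRing.Theory Num.Theory.
Local Open Scope ring_scope.

Section TensorCast.
Variable R : comPzRingType.

Lemma castmx_mulmx m1 m2 n1 n2 p1 p2 (e1 : m1 = m2) (e2 : n1 = n2) (e3 : p1 = p2)
  (A : 'M[R]_(m1, n1)) (B : 'M[R]_(n1, p1)) :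
  castmx (e1, e2) A *m castmx (e2, e3) B = castmx (e1, e3) (A *m B).
Proof. by case: m2 / e1; case: n2 / e2; case: p2 / e3; rewrite !castmx_id. Qed.

Lemma castmxZ m1 m2 n1 n2 (e : (m1 = m2) * (n1 = n2)) (c : R) (A : 'M[R]_(m1, n1)) :
  castmx e (c *: A) = c *: castmx e A.
Proof. by apply/matrixP => i j; rewrite !(castmxE, mxE). Qed.

Lemma castmx1 m1 m2 (e : m1 = m2) : castmx (e, e) (1%:M : 'M[R]_m1) = 1%:M.
Proof. by case: m2 / e; rewrite castmx_id. Qed.

Lemma mxtrace_castmx m1 m2 (e : m1 = m2) (A : 'M[R]_m1) : \tr (castmx (e, e) A) = \tr A.
Proof. by case: m2 / e; rewrite castmx_id. Qed.

Lemma tensmx_castl m1 m2 n1 n2 p q (e1 : m1 = m2) (e2 : n1 = n2)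
  (A : 'M[R]_(m1, n1)) (B : 'M[R]_(p, q)) :
  castmx (e1, e2) A *t B = castmx (congr1 (muln^~ p) e1, congr1 (muln^~ q) e2) (A *t B).
Proof. by case: m2 / e1; case: n2 / e2; rewrite !castmx_id. Qed.

Lemma tensmx_castr m1 m2 n1 n2 p q (e1 : m1 = m2) (e2 : n1 = n2)
  (A : 'M[R]_(p, q)) (B : 'M[R]_(m1, n1)) :
  A *t castmx (e1, e2) B = castmx (congr1 (muln p) e1, congr1 (muln q) e2) (A *t B).
Proof. by case: m2 / e1; case: n2 / e2; rewrite !castmx_id. Qed.

Lemma tensmxZl m n p q (c : R) (A : 'M[R]_(m, n)) (B : 'M[R]_(p, q)) :
  (c *: A) *t B = c *: (A *t B).
Proof. by apply/matrixP => i j; rewrite !mxE mulrA. Qed.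

Lemma tensmxZr m n p q (c : R) (A : 'M[R]_(m, n)) (B : 'M[R]_(p, q)) :
  A *t (c *: B) = c *: (A *t B).
Proof. by apply/matrixP => i j; rewrite !mxE mulrCA. Qed.

Lemma tensmxA m1 n1 m2 n2 m3 n3
  (A : 'M[R]_(m1, n1)) (B : 'M[R]_(m2, n2)) (C : 'M[R]_(m3, n3)) :
  (A *t B) *t C = castmx (mulnA _ _ _, mulnA _ _ _) (A *t (B *t C)).
Proof.
apply/matrixP => i j; rewrite castmxE.
case: (mxtens_indexP i) => i12 i3; case: (mxtens_indexP i12) => i1 i2.
case: (mxtens_indexP j) => j12 j3; case: (mxtens_indexP j12) => j1 j2.
have reassoc a b c (k1 : 'I_a) (k2 : 'I_b) (k3 : 'I_c) :
    cast_ord (esym (mulnA a b c)) (mxtens_index (mxtens_index (k1, k2), k3))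
    = mxtens_index (k1, mxtens_index (k2, k3)).
  by apply: val_inj; rewrite /= mulnDl -mulnA addnA.
by rewrite !reassoc !tensmxE mulrA.
Qed.

Lemma tensmx11 m n : (1%:M : 'M[R]_m) *t (1%:M : 'M[R]_n) = 1%:M.
Proof.
apply/matrixP => i j.
case: (mxtens_indexP i) => i1 i2; case: (mxtens_indexP j) => j1 j2.
rewrite tensmxE !mxE (can_eq (@mxtens_indexK _ _)) xpair_eqE.
by case: (i1 == j1); case: (i2 == j2); rewrite ?mulr1 ?mulr0 ?mul0r.
Qed.

Lemma mxtrace_tensmx m n (A : 'M[R]_m) (B : 'M[R]_n) : \tr (A *t B) = \tr A * \tr B.
Proof. by rewrite /mxtrace mulr_sum; apply: eq_bigr => k _; rewrite mxE. Qed.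

(* Both an embedded gate and a Kronecker product split at a qubit have this shape. *)
Definition tens3 m p k N (E : (m * p * k)%N = N)
  (A : 'M[R]_m) (B : 'M[R]_p) (C : 'M[R]_k) : 'M[R]_N :=
  castmx (E, E) (A *t B *t C).

Lemma tens3_mul m p k N (E : (m * p * k)%N = N) A B C A' B' C' :
  tens3 E A B C *m tens3 E A' B' C' = tens3 E (A *m A') (B *m B') (C *m C').
Proof. by rewrite /tens3 castmx_mulmx !tensmx_mul. Qed.

Lemma tens3Z m p k N (E : (m * p * k)%N = N) A c B C :
  tens3 E A (c *: B) C = c *: tens3 E A B C.
Proof. by rewrite /tens3 tensmxZr tensmxZl castmxZ. Qed.

Lemma tens3_1 m p k N (E : (m * p * k)%N = N) : tens3 E 1%:M 1%:M 1%:M = 1%:M.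
Proof. by rewrite /tens3 !tensmx11 castmx1. Qed.

End TensorCast.

Section Kron.
Variable R : realType.
Implicit Types f g : nat -> 'M[R]_2.

Lemma kronS n f : kron R n.+1 f =
  castmx (esym (expnS 2 n), esym (expnS 2 n)) (f 0%N *t kron R n (fun i => f i.+1)).
Proof. by []. Qed.

Lemma eq_kron n f g : (forall i, (i < n)%N -> f i = g i) -> kron R n f = kron R n g.
Proof.
elim: n f g => [|n IH] f g fg //.
by rewrite !kronS fg // (IH _ (fun i => g i.+1)) // => i lt_in; apply: fg.
Qed.

Lemma kronD a b f (E : (2 ^ a * 2 ^ b)%N = (2 ^ (a + b))%N) :
  kron R (a + b) f = castmx (E, E) (kron R a f *t kron R b (fun i => f (a + i)%N)).
Proof.
elim: a f E => [|a IH] f E.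
  by rewrite /= tens_scalar1mx castmx_comp (eq_castmx _ (erefl, erefl)) castmx_id.
rewrite [in LHS]kronS (IH _ (esym (expnD 2 a b))) tensmx_castr castmx_comp.
by rewrite kronS tensmx_castl castmx_comp tensmxA castmx_comp; apply: eq_castmx.
Qed.

Lemma kron_tens3_1 a b f (E : (2 ^ a * 2 * 2 ^ b)%N = (2 ^ (a + b.+1))%N) :
  kron R (a + b.+1) f = tens3 E (kron R a f) (f a) (kron R b (fun i => f (a.+1 + i)%N)).
Proof.
rewrite (kronD _ (esym (expnD 2 a b.+1))) kronS tensmx_castr castmx_comp addn0.
rewrite (@eq_kron b (fun i => f (a + i.+1)%N) (fun i => f (a.+1 + i)%N)); last first.
  by move=> i _; rewrite addnS.
by rewrite (castmx_sym (tensmxA _ _ _)) castmx_comp /tens3; apply: eq_castmx.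
Qed.

Lemma kron_tens3_2 a b f (E : (2 ^ a * 4 * 2 ^ b)%N = (2 ^ (a + b.+2))%N) :
  kron R (a + b.+2) f =
  tens3 E (kron R a f) (f a *t f a.+1) (kron R b (fun i => f (a.+2 + i)%N)).
Proof.
rewrite (kronD _ (esym (expnD 2 a b.+2))) !kronS tensmx_castr castmx_comp addn0 addn1.
rewrite (@eq_kron b (fun i => f (a + i.+2)%N) (fun i => f (a.+2 + i)%N)); last first.
  by move=> i _; rewrite !addnS.
rewrite (castmx_sym (tensmxA _ _ _)) castmx_comp tensmx_castr castmx_comp.
rewrite (castmx_sym (tensmxA _ _ _)) castmx_comp (tensmxA (kron R a f)) tensmx_castl.
by rewrite castmx_comp /tens3; apply: eq_castmx.
Qed.

Lemma kron_mul n f g : kron R n f *m kron R n g = kron R n (fun i => f i *m g i).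
Proof.
elim: n f g => [|n IH] f g; first by rewrite /= mulmx1.
by rewrite !kronS castmx_mulmx tensmx_mul IH.
Qed.

Lemma kronZ n (c : nat -> R) f :
  kron R n (fun i => c i *: f i) = (\prod_(i < n) c i) *: kron R n f.
Proof.
elim: n c f => [|n IH] c f; first by rewrite big_ord0 scale1r.
by rewrite !kronS IH tensmxZl tensmxZr scalerA castmxZ big_ord_recl mulrC.
Qed.

Lemma kron1 n : kron R n (fun _ => 1%:M) = 1%:M.
Proof. by elim: n => [|n IH] //; rewrite kronS IH tensmx11 castmx1. Qed.

Lemma mxtrace_kron n f : \tr (kron R n f) = \prod_(i < n) \tr (f i).
Proof.
elim: n f => [|n IH] f; first by rewrite big_ord0 mxtrace1.
by rewrite kronS mxtrace_castmx mxtrace_tensmx IH big_ord_recl.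
Qed.

Lemma trmx_kron n f : (kron R n f)^T = kron R n (fun i => (f i)^T).
Proof.
elim: n f => [|n IH] f; first by rewrite /= trmx1.
by rewrite !kronS trmx_cast trmx_tens IH.
Qed.

Lemma conform_mx1 m N (E : m = N) (A : 'M[R]_m) : conform_mx (1%:M : 'M[R]_N) A = castmx (E, E) A.
Proof. by rewrite -(conform_castmx (E, E)) conform_mx_id. Qed.

Lemma embed1_tens3 a b (G : 'M[R]_2) (E : (2 ^ a * 2 * 2 ^ b)%N = (2 ^ (a + b.+1))%N) :
  embed1 (a + b.+1) a.+1 G = tens3 E 1%:M G 1%:M.
Proof. by rewrite /embed1 /= (_ : a + b.+1 - a.+1 = b)%N ?(conform_mx1 E) //; lia. Qed.

Lemma embed2_tens3 a b (G : 'M[R]_4) (E : (2 ^ a * 4 * 2 ^ b)%N = (2 ^ (a + b.+2))%N) :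
  embed2 (a + b.+2) a.+1 G = tens3 E 1%:M G 1%:M.
Proof. by rewrite /embed2 /= (_ : a + b.+2 - a.+2 = b)%N ?(conform_mx1 E) //; lia. Qed.

Lemma embed1_conj n q (G F : 'M[R]_2) f c : (0 < q <= n)%N -> G *m f q.-1 *m G = c *: F ->
  embed1 n q G *m kron R n f *m embed1 n q G =
  c *: kron R n (fun i => if i == q.-1 then F else f i).
Proof.
case: q => // a /andP[_ le_an] conjG /=.
have [b ->] : exists b, n = (a + b.+1)%N by exists (n - a.+1)%N; lia.
have E : (2 ^ a * 2 * 2 ^ b = 2 ^ (a + b.+1))%N by rewrite -mulnA -expnS expnD.
rewrite (embed1_tens3 _ E) !(kron_tens3_1 _ E) !tens3_mul !mul1mx !mulmx1 conjG tens3Z eqxx.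
by congr (_ *: tens3 _ _ _ _); apply: eq_kron => i lt_i; rewrite ifN //; apply/eqP; lia.
Qed.

Lemma embed2_conj n q (G : 'M[R]_4) f (F1 F2 : 'M[R]_2) c : (0 < q < n)%N ->
  G *m (f q.-1 *t f q) *m G = c *: (F1 *t F2) ->
  embed2 n q G *m kron R n f *m embed2 n q G =
  c *: kron R n (fun i => if i == q.-1 then F1 else if i == q then F2 else f i).
Proof.
case: q => // a /andP[_ lt_an] conjG /=.
have [b ->] : exists b, n = (a + b.+2)%N by exists (n - a.+2)%N; lia.
have E : (2 ^ a * 4 * 2 ^ b = 2 ^ (a + b.+2))%N.
  by rewrite -mulnA (_ : 4 = 2 * 2)%N // -mulnA -!expnS expnD.
rewrite (embed2_tens3 _ E) !(kron_tens3_2 _ E) !tens3_mul !mul1mx !mulmx1 conjG tens3Z.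
have Sa : (a.+1 == a) = false by lia.
rewrite !eqxx Sa; congr (_ *: tens3 _ _ _ _);
  by apply: eq_kron => i lt_i; rewrite !ifN //; apply/eqP; lia.
Qed.

Lemma embed1_sqr n q (G : 'M[R]_2) : (0 < q <= n)%N -> G *m G = 1%:M ->
  embed1 n q G *m embed1 n q G = 1%:M.
Proof.
case: q => // a /andP[_ le_an] GG.
have [b ->] : exists b, n = (a + b.+1)%N by exists (n - a.+1)%N; lia.
have E : (2 ^ a * 2 * 2 ^ b = 2 ^ (a + b.+1))%N by rewrite -mulnA -expnS expnD.
by rewrite (embed1_tens3 _ E) tens3_mul !mulmx1 GG tens3_1.
Qed.

Lemma embed2_sqr n q (G : 'M[R]_4) : (0 < q < n)%N -> G *m G = 1%:M ->
  embed2 n q G *m embed2 n q G = 1%:M.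
Proof.
case: q => // a /andP[_ lt_an] GG.
have [b ->] : exists b, n = (a + b.+2)%N by exists (n - a.+2)%N; lia.
have E : (2 ^ a * 4 * 2 ^ b = 2 ^ (a + b.+2))%N.
  by rewrite -mulnA (_ : 4 = 2 * 2)%N // -mulnA -!expnS expnD.
by rewrite (embed2_tens3 _ E) tens3_mul !mulmx1 GG tens3_1.
Qed.

End Kron.

(** * Pauli matrices *)

Section Letters.
Variable R : realType.

Lemma ord2P (i : 'I_2) : i = 0 \/ i = 1.
Proof. by case: i => [[|[|//]] lt_i]; [left|right]; apply: val_inj. Qed.

Definition mx2 (a b c d : R) : 'M[R]_2 :=
  \matrix_(i, j) if i == 0 then (if j == 0 then a else b) else (if j == 0 then c else d).

Ltac mx2_entries := let i := fresh "i" in let j := fresh "j" in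
  apply/matrixP => i j; rewrite !mxE; case: (ord2P i) => ->; case: (ord2P j) => ->.

Lemma mx2_mul a b c d a' b' c' d' :
  mx2 a b c d *m mx2 a' b' c' d' =
  mx2 (a * a' + b * c') (a * b' + b * d') (c * a' + d * c') (c * b' + d * d').
Proof.
apply/matrixP => i j; rewrite !mxE !big_ord_recr big_ord0 /= !mxE /= add0r.
by case: (ord2P i) => ->; case: (ord2P j) => ->.
Qed.

Lemma mx2Z k a b c d : k *: mx2 a b c d = mx2 (k * a) (k * b) (k * c) (k * d).
Proof. by mx2_entries. Qed.

Lemma trmx_mx2 a b c d : (mx2 a b c d)^T = mx2 a c b d.
Proof. by mx2_entries. Qed.

Lemma mxtrace_mx2 a b c d : \tr (mx2 a b c d) = a + d.
Proof. by rewrite /mxtrace !big_ord_recr big_ord0 /= !mxE /= add0r. Qed.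

Lemma mx2_1 : 1%:M = mx2 1 0 0 1. Proof. by mx2_entries. Qed.
Lemma mx2_X : Xm R = mx2 0 1 1 0. Proof. by mx2_entries. Qed.
Lemma mx2_Z : Zm R = mx2 1 0 0 (-1). Proof. by mx2_entries. Qed.
Lemma mx2_H : Hm R = (Num.sqrt 2)^-1 *: mx2 1 1 1 (-1).
Proof. by rewrite /Hm; congr (_ *: _); mx2_entries. Qed.

Lemma invsqrt2_sqr_mul2 : (Num.sqrt 2)^-1 * (Num.sqrt 2)^-1 * 2 = 1 :> R.
Proof.
rewrite -invrM ?unitfE ?sqrtr_eq0 -?ltNge ?ltr0n // -expr2 sqr_sqrtr ?ler0n //.
by rewrite mulVf // pnatr_eq0.
Qed.

Definition letter_mx (l : letter) : 'M[R]_2 :=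
  match l with
  | (false, false) => 1%:M | (true, false) => Xm R
  | (false, true) => Zm R | (true, true) => Xm R *m Zm R
  end.

Lemma letter_mxE l : letter_mx l =
  match l with
  | (false, false) => mx2 1 0 0 1 | (true, false) => mx2 0 1 1 0
  | (false, true) => mx2 1 0 0 (-1) | (true, true) => mx2 0 (-1) 1 0
  end.
Proof. by case: l => [[] []]; rewrite /= ?mx2_1 ?mx2_X ?mx2_Z ?mx2_mul //; congr mx2; ring. Qed.

Ltac letter_cases := case=> [[] []];
  rewrite ?mx2_1 ?mx2_Z !letter_mxE /= ?trmx_mx2 ?mx2_mul ?mx2Z ?mxtrace_mx2; try congr mx2; ring.

Lemma H_conj l : Hm R *m letter_mx l *m Hm R = (-1) ^+ isY l *: letter_mx (l.2, l.1).
Proof.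
have HH : mx2 1 1 1 (-1) *m letter_mx l *m mx2 1 1 1 (-1) =
          2 *: ((-1) ^+ isY l *: letter_mx (l.2, l.1)) by move: l; letter_cases.
by rewrite mx2_H -!scalemxAl -scalemxAr HH !scalerA mulrA invsqrt2_sqr_mul2 mul1r.
Qed.

Lemma Z_conj l : Zm R *m letter_mx l *m Zm R = (-1) ^+ l.1 *: letter_mx l.
Proof. by move: l; letter_cases. Qed.

Lemma Zm_letter_mx l : Zm R *m letter_mx l = (-1) ^+ l.1 *: (letter_mx l *m Zm R).
Proof. by move: l; letter_cases. Qed.

Lemma letter_mx_sqr l : letter_mx l *m letter_mx l = (-1) ^+ isY l *: 1%:M.
Proof. by move: l; letter_cases. Qed.

Lemma mxtrace_letter_mx l l' :
  \tr (letter_mx l *m (letter_mx l')^T) = if l == l' then 2 else 0.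
Proof. by case: l => [[] []]; move: l'; letter_cases. Qed.

Definition cz_sign (i : 'I_4) : R := if i == 3 :> nat then -1 else 1.

Lemma CZ_conj_entry (A : 'M[R]_4) i j : (CZm R *m A *m CZm R) i j = cz_sign i * A i j * cz_sign j.
Proof.
have CZ_mull (B : 'M[R]_4) k : (CZm R *m B) i k = cz_sign i * B i k.
  rewrite mxE (bigD1 i) //= big1 ?addr0; first by rewrite !mxE eqxx.
  by move=> l ne_li; rewrite !mxE eq_sym (negbTE ne_li) mul0r.
rewrite mxE (bigD1 j) //= big1 ?addr0; first by rewrite CZ_mull !mxE eqxx.
by move=> l ne_lj; rewrite [CZm R l j]mxE (negbTE ne_lj) mulr0.
Qed.

Lemma CZ_conj l1 l2 : CZm R *m (letter_mx l1 *t letter_mx l2) *m CZm R =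
  (-1) ^+ (l1.1 && l2.1) *: (letter_mx (l1.1, l1.2 (+) l2.1) *t letter_mx (l2.1, l2.2 (+) l1.1)).
Proof.
apply/matrixP => i j; rewrite CZ_conj_entry [RHS]mxE.
case: (@mxtens_indexP 2 2 i) => i1 i2; case: (@mxtens_indexP 2 2 j) => j1 j2.
rewrite !tensmxE /cz_sign !letter_mxE.
by case: l1 => [[] []]; case: l2 => [[] []];
  case: (ord2P i1) => ->; case: (ord2P i2) => ->; case: (ord2P j1) => ->; case: (ord2P j2) => ->;
  rewrite /= !mxE /=; ring.
Qed.

End Letters.

Lemma invmx_eq (R : comUnitRingType) m (C D : 'M[R]_m) : C *m D = 1%:M -> invmx C = D.
Proof.
by move=> CD; have [uC _] := mulmx1_unit CD; rewrite -[invmx C]mulmx1 -CD mulKmx.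
Qed.

Section Conjugation.
Variables (R : realType) (n : nat).
Implicit Types A B C : 'M[R]_(2 ^ n).

Lemma conj_byM C A B : C \in unitmx -> conj_by C (A *m B) = conj_by C A *m conj_by C B.
Proof. by move=> uC; rewrite /conj_by !mulmxA mulmxKV. Qed.

Lemma conj_by1 C : C \in unitmx -> conj_by C 1%:M = 1%:M.
Proof. by move=> uC; rewrite /conj_by mulmx1 mulmxV. Qed.

Lemma conj_byN C A : conj_by C (- A) = - conj_by C A.
Proof. by rewrite /conj_by mulmxN mulNmx. Qed.

End Conjugation.

Lemma prod_signr_y_parity (R : pzRingType) (w : word) k :
  \prod_(i < k) (-1) ^+ isY (w i) = (-1) ^+ y_parity w k :> R.
Proof. by elim: k => [|k IH]; rewrite ?big_ord0 // big_ord_recr IH /= -signr_addb. Qed.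

Section PauliMatrices.
Variables (R : realType) (n : nat).

Definition pauli_mx (st : bool * word) : 'M[R]_(2 ^ n) :=
  (-1) ^+ st.1 *: kron R n (fun i => letter_mx R (st.2 i)).

Lemma gate_op_conj g st : valid_gate n g ->
  gate_op R n g *m pauli_mx st *m gate_op R n g = pauli_mx (gate_act g st).
Proof.
case: st => s w; rewrite /pauli_mx -scalemxAr -scalemxAl; case: g => q /= vg.
- rewrite (embed1_conj vg (H_conj R (w q.-1))) scalerA -signr_addb.
  by congr (_ *: _); apply: eq_kron => i _; rewrite /upd; case: (i == q.-1).
- rewrite (embed1_conj vg (Z_conj R (w q.-1))) scalerA -signr_addb.
  by congr (_ *: _); apply: eq_kron => i _; case: eqP => // ->.
- rewrite (embed2_conj vg (CZ_conj R (w q.-1) (w q))) scalerA -signr_addb.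
  congr (_ *: _); apply: eq_kron => i _; rewrite /upd.
  by case: (i =P q) => [->|_]; [rewrite ifN //; apply/eqP; lia | case: (i == q.-1)].
Qed.

Lemma gate_op_sqr g : valid_gate n g -> gate_op R n g *m gate_op R n g = 1%:M.
Proof.
case: g => q /= vg.
- by apply: embed1_sqr => //; have := H_conj R lI; rewrite /= mulmx1 scale1r.
- by apply: embed1_sqr => //; have := Z_conj R lI; rewrite /= mulmx1 scale1r.
- by apply: embed2_sqr => //; have := CZ_conj R lI lI; rewrite /= !tensmx11 mulmx1 scale1r.
Qed.

Lemma circuit_op_foldl gs (A : 'M[R]_(2 ^ n)) :
  foldl (fun acc g => gate_op R n g *m acc) A gs = circuit_op R n gs *m A.
Proof.
elim: gs A => [|g gs IH] A /=; first by rewrite /circuit_op /= mul1mx.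
by rewrite /circuit_op /= !IH mulmx1 mulmxA.
Qed.

Lemma circuit_op_cat gs1 gs2 :
  circuit_op R n (gs1 ++ gs2) = circuit_op R n gs2 *m circuit_op R n gs1.
Proof. by rewrite {1}/circuit_op foldl_cat circuit_op_foldl. Qed.

Lemma circuit_op1 g : circuit_op R n [:: g] = gate_op R n g.
Proof. by rewrite /circuit_op /= mulmx1. Qed.

Lemma circuit_op_rev gs : all (valid_gate n) gs ->
  circuit_op R n gs *m circuit_op R n (rev gs) = 1%:M.
Proof.
elim: gs => [|g gs IH] /=; first by rewrite /circuit_op /= mulmx1.
case/andP=> vg vgs; rewrite rev_cons -cats1 -cat1s !circuit_op_cat !circuit_op1.
by rewrite mulmxA -(mulmxA (circuit_op _ _ gs)) gate_op_sqr // mulmx1 IH.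
Qed.

Lemma circuit_op_unit gs : all (valid_gate n) gs -> circuit_op R n gs \in unitmx.
Proof. by move/circuit_op_rev/mulmx1_unit => []. Qed.

Lemma conj_by_circuit gs st : all (valid_gate n) gs ->
  conj_by (circuit_op R n gs) (pauli_mx st) = pauli_mx (circuit_act gs st).
Proof.
move=> vgs; rewrite /conj_by (invmx_eq (circuit_op_rev vgs)).
elim: gs st vgs => [|g gs IH] st /=; first by rewrite /circuit_op /= mul1mx mulmx1.
case/andP=> vg vgs; rewrite rev_cons -cats1 -cat1s !circuit_op_cat !circuit_op1 -IH //.
by rewrite -gate_op_conj // !mulmxA.
Qed.

Lemma scalar1_inj (c d : R) : c *: (1%:M : 'M[R]_(2 ^ n)) = d *: 1%:M -> c = d.
Proof.
move/(congr1 mxtrace); rewrite !mxtraceZ mxtrace1; apply: mulIf.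
by rewrite pnatr_eq0 expn_eq0.
Qed.

Lemma pauli_mx_sqr st : pauli_mx st *m pauli_mx st = (-1) ^+ y_parity st.2 n *: 1%:M.
Proof.
rewrite /pauli_mx -scalemxAl -scalemxAr scalerA -signr_addb addbb scale1r kron_mul.
under eq_kron do rewrite letter_mx_sqr.
by rewrite kronZ kron1 prod_signr_y_parity.
Qed.

Lemma y_parity_of_sqr st : pauli_mx st *m pauli_mx st = 1%:M -> y_parity st.2 n = false.
Proof.
rewrite pauli_mx_sqr -{2}(scale1r 1%:M) => /scalar1_inj sign1.
exact: (@signr_inj R _ false sign1).
Qed.

Lemma pauli_mx_nontrivial st : pauli_mx st <> 1%:M -> pauli_mx st <> - 1%:M ->
  exists2 i, (i < n)%N & st.2 i != lI.
Proof.
case: st => s w neq1 neqN1.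
have [/existsP[i wi]|/existsPn allI] := boolP [exists i : 'I_n, w i != lI]; first by exists i.
have scalar : pauli_mx (s, w) = (-1) ^+ s *: 1%:M.
  rewrite /pauli_mx -kron1; congr (_ *: _); apply: eq_kron => i lt_in.
  by move/negPn/eqP: (allI (Ordinal lt_in)) => /= ->.
by move: neq1 neqN1; rewrite scalar; case: s {scalar}; rewrite ?scale1r ?scaleN1r.
Qed.

Lemma Z0_anticomm_xbit st :
  pauli_mx st *m pauli_mx (false, word_at 0 lZ) =
    - (pauli_mx (false, word_at 0 lZ) *m pauli_mx st) ->
  (st.2 0).1.
Proof.
case: st => s w /= anti; apply/negPn/negP => /negbTE x0.
pose P := pauli_mx (s, w); pose Z0 := pauli_mx (false, word_at 0 lZ).
have comm : P *m Z0 = Z0 *m P.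
  rewrite /P /Z0 /pauli_mx -!scalemxAl -!scalemxAr !scalerA mulrC !kron_mul.
  congr (_ *: _); apply: eq_kron => i _ /=; rewrite /word_at.
  by case: ifPn => [/eqP->|_]; rewrite /= ?Zm_letter_mx ?x0 ?expr0 ?scale1r ?mulmx1 ?mul1mx.
have PZ0 : P *m Z0 = 0.
  move: anti; rewrite -/P -/Z0 -comm => /eqP; rewrite -subr_eq0 opprK -mulr2n -scaler_nat.
  by rewrite scalemx_eq0 pnatr_eq0 => /eqP.
have Z0Z0 : Z0 *m Z0 = 1%:M by rewrite pauli_mx_sqr y_parity_word_at ?scale1r.
have PP0 : P *m P = 0 by rewrite -{1}(mulmx1 P) -Z0Z0 mulmxA PZ0 !mul0mx.
move: PP0; rewrite pauli_mx_sqr -(scale0r (1%:M : 'M[R]_(2 ^ n))) => /scalar1_inj/eqP.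
by rewrite signr_eq0.
Qed.

Lemma mxtrace_kron_letters w w' :
  \tr (kron R n (fun i => letter_mx R (w i)) *m (kron R n (fun i => letter_mx R (w' i)))^T) =
  \prod_(i < n) (if w i == w' i then 2 else 0).
Proof.
by rewrite trmx_kron kron_mul mxtrace_kron; apply: eq_bigr => i _; rewrite mxtrace_letter_mx.
Qed.

Lemma pauli_mx_inj st st' : wf_word n st.2 -> wf_word n st'.2 ->
  pauli_mx st = pauli_mx st' -> st = st'.
Proof.
case: st st' => [s w] [s' w'] /= wf_w wf_w' /(congr1 (fun A =>
  \tr (A *m (kron R n (fun i => letter_mx R (w i)))^T))).
rewrite /= /pauli_mx /= -!scalemxAl !mxtraceZ !mxtrace_kron_letters.
under [X in _ * X = _]eq_bigr do rewrite eqxx.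
rewrite prodr_const card_ord => tr_eq.
have two_n : (2 : R) ^+ n != 0 by rewrite expf_neq0 // pnatr_eq0.
have w_eq i : (i < n)%N -> w' i = w i.
  move=> lt_in; apply/eqP/negPn/negP => ne; move: tr_eq.
  rewrite (bigD1 (Ordinal lt_in)) //= ifN // mul0r mulr0 => /eqP.
  by rewrite mulf_eq0 signr_eq0 (negbTE two_n).
move: tr_eq; have -> : w' = w.
  by apply: funext => i; case: (ltnP i n) => [/w_eq //|le_ni]; rewrite wf_w ?wf_w'.
under eq_bigr do rewrite eqxx.
by rewrite prodr_const card_ord => /(mulIf two_n) sign_eq; rewrite (signr_inj sign_eq).
Qed.

Definition letter_of (M : 'M[R]_2) : letter :=
  if M == 1%:M then lI else if M == Xm R then lX else if M == Zm R then lZ else lY.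

Lemma letter_ofK M : M \in [:: 1%:M; Xm R; Zm R; Xm R *m Zm R] -> letter_mx R (letter_of M) = M.
Proof.
rewrite /letter_of !inE.
by case: eqP => [-> //|_]; case: eqP => [-> //|_]; case: eqP => [-> //|_] /eqP ->.
Qed.

Lemma pauli_group_pauli_mx P : pauli_group R n P -> exists2 st, wf_word n st.2 & P = pauli_mx st.
Proof.
case=> c [f [c_sign [f_in ->]]].
exists (c == -1, fun i => if (i < n)%N then letter_of (f i) else lI).
  by move=> i le_ni /=; rewrite ltnNge le_ni.
rewrite /pauli_mx /=; congr (_ *: _).
  by case: c_sign => ->; rewrite ?eqxx // (_ : 1 == -1 = false) //; apply/eqP; lra.
by apply: eq_kron => i lt_in; rewrite lt_in letter_ofK // f_in.
Qed.

Lemma pauli_mx_word_at k l :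
  pauli_mx (false, word_at k l) = kron R n (fun i => if i == k then letter_mx R l else 1%:M).
Proof.
by rewrite /pauli_mx expr0 scale1r; apply: eq_kron => i _ /=; rewrite /word_at; case: (i == k).
Qed.

End PauliMatrices.

Lemma conj_by_normal_formP (R : realType) n L M st st' : (0 < n)%N ->
  is_zcircuit n L -> is_xcircuit n M -> wf_word n st.2 -> wf_word n st'.2 ->
  conj_by (circuit_op R n (xcircuit_gates n M) *m circuit_op R n (zcircuit_gates L))
    (pauli_mx R n st) = pauli_mx R n st' <->
  circuit_act (zcircuit_gates L ++ xcircuit_gates n M) st = st'.
Proof.
move=> n0 zL xM wf_st wf_st'.
have vLM : all (valid_gate n) (zcircuit_gates L ++ xcircuit_gates n M).
  by rewrite all_cat zcircuit_valid ?xcircuit_valid.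
rewrite -circuit_op_cat conj_by_circuit //; split=> [|-> //].
exact/pauli_mx_inj/wf_st'/wf_circuit_act.
Qed.

Theorem proposition4p14 (R : realType) (n : nat) (P Q : 'M[R]_(2 ^ n)) :
  (1 <= n)%N ->
  pauli_group R n P -> pauli_group R n Q ->
  P *m P = 1%:M -> Q *m Q = 1%:M ->
  P <> 1%:M -> P <> - 1%:M -> Q <> 1%:M -> Q <> - 1%:M ->
  P *m Q = - (Q *m P) ->
  exists! LM : zcircuit * xcircuit,
    is_zcircuit n LM.1 /\ is_xcircuit n LM.2 /\
    conj_by (circuit_op R n (xcircuit_gates n LM.2) *m circuit_op R n (zcircuit_gates LM.1)) P
      = kron R n (fun i => if i == n.-1 then Zm R else 1%:M) /\
    conj_by (circuit_op R n (xcircuit_gates n LM.2) *m circuit_op R n (zcircuit_gates LM.1)) Q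
      = kron R n (fun i => if i == n.-1 then Xm R else 1%:M).
Proof.
move=> n0 /pauli_group_pauli_mx[stP wfP ->] /pauli_group_pauli_mx[stQ wfQ ->] PP QQ P1 PN1 _ _ PQ.
rewrite -(pauli_mx_word_at R n n.-1 lZ) -(pauli_mx_word_at R n n.-1 lX).
pose L := zcircuit_of n stP.
have [zL LP] := zcircuit_of_spec wfP (pauli_mx_nontrivial P1 PN1) (y_parity_of_sqr PP).
pose Q' := circuit_act (zcircuit_gates L) stQ.
have conjL st := conj_by_circuit R st (zcircuit_valid zL).
have uL := circuit_op_unit R (zcircuit_valid zL).
have Q'Q' : pauli_mx R n Q' *m pauli_mx R n Q' = 1%:M by rewrite -conjL -conj_byM // QQ conj_by1.
have Q'Z0 : pauli_mx R n Q' *m pauli_mx R n (false, word_at 0 lZ) =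
    - (pauli_mx R n (false, word_at 0 lZ) *m pauli_mx R n Q').
  by rewrite -LP -!conjL -!conj_byM // -conj_byN PQ opprK.
have [xM MQ'] := xcircuit_of_spec n0 (wf_circuit_act (zcircuit_valid zL) wfQ)
  (Z0_anticomm_xbit Q'Z0) (y_parity_of_sqr Q'Q').
have wf_target l : wf_word n (word_at n.-1 l) by apply: wf_word_at; rewrite ltn_predL.
have [wfZ wfX] := (wf_target lZ, wf_target lX).
exists (L, xcircuit_of n Q'); split=> [/=|[L' M'] /= [zL' [xM' []]]].
  rewrite !conj_by_normal_formP //.
  by rewrite !(circuit_act_cat (zcircuit_gates L)) LP xcircuit_act_Z.
rewrite !conj_by_normal_formP // => eP eQ.
by have [-> ->] := normal_form_canonical n0 zL' xM' eP eQ.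
Qed.
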